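(* Let $n,k,l$ be nonnegative integers with $k+l\le n$ and let $\alpha,\beta>-1$. For each $i=k+l,k+l+1,\ldots,n$, the modified Jacobi polynomial has the Bernstein representation \[ J_{i,k,l}^{(\alpha,\beta)}(x)=\sum_{h=k}^{n-l}c_{ih}B^n_h(x), \] where \[ c_{ih}=\frac{(\alpha+2l+1)_{i-k-l}}{(i-k-l)!}\binom{n}{h}^{-1}\binom{n-k-l}{h-k}\,Q_{i-k-l}(n-l-h;\,\alpha+2l,\,\beta+2k,\,n-k-l)\qquad(h=k,\ldots,n-l). \]
   Context: Pochhammer symbol: $(a)_0=1$, $(a)_j=a(a+1)\cdots(a+j-1)$. Bernstein polynomials: $B^n_j(x)=\binom nj x^j(1-x)^{n-j}$. Shifted Jacobi polynomials: for $a,b>-1$ and $m\ge0$, $R^{(a,b)}_m(x)=\frac{(a+1)_m}{m!}\sum_{j=0}^m\frac{(-m)_j(m+a+b+1)_j}{j!\,(a+1)_j}(1-x)^j$. Modified Jacobi polynomials: $J_{i,k,l}^{(\alpha,\beta)}(x)=(1-x)^l x^k R^{(\alpha+2l,\beta+2k)}_{i-k-l}(x)$ for $i\ge k+l$. Hahn polynomials: for a nonnegative integer $N$, $a,b>-1$ and $m=0,1,\ldots,N$, $Q_m(x;a,b,N)=\sum_{j=0}^m\frac{(-m)_j(m+a+b+1)_j(-x)_j}{j!\,(a+1)_j\,(-N)_j}$. *)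

From mathcomp Require Import all_boot all_order all_algebra.
Set Implicit Arguments. Unset Strict Implicit. Unset Printing Implicit Defensive.
Import Order.TTheory GRing.Theory Num.Theory.
Local Open Scope ring_scope.

Definition poch {R : ringType} (a : R) (j : nat) : R :=
  \prod_(i < j) (a + i%:R).

Definition bern {R : ringType} (n j : nat) (x : R) : R :=
  'C(n, j)%:R * x ^+ j * (1 - x) ^+ (n - j).

Definition shJacobi {R : fieldType} (a b : R) (m : nat) (x : R) : R :=
  poch (a + 1) m / (m`!)%:R *
  \sum_(j < m.+1)
     (poch (- m%:R) j * poch (m%:R + a + b + 1) j / ((j`!)%:R * poch (a + 1) j))
     * (1 - x) ^+ j.

(* Modified Jacobi polynomial J_{i,k,l}^{(alpha,beta)}(x) (meaningful for i >= k+l). *)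
Definition modJacobi {R : fieldType} (alpha beta : R) (i k l : nat) (x : R) : R :=
  (1 - x) ^+ l * x ^+ k *
  shJacobi (alpha + 2 * l%:R) (beta + 2 * k%:R) (i - k - l) x.

Definition hahn {R : fieldType} (m : nat) (x a b : R) (N : nat) : R :=
  \sum_(j < m.+1)
     poch (- m%:R) j * poch (m%:R + a + b + 1) j * poch (- x) j
     / ((j`!)%:R * poch (a + 1) j * poch (- N%:R) j).

Definition coefJB {R : fieldType} (alpha beta : R) (n k l i h : nat) : R :=
  poch (alpha + 2 * l%:R + 1) (i - k - l) / ((i - k - l)`!)%:R
  * ('C(n, h)%:R)^-1 * 'C(n - k - l, h - k)%:R
  * hahn (i - k - l) (n - l - h)%:R (alpha + 2 * l%:R) (beta + 2 * k%:R) (n - k - l).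

(* Write R^{(a,b)}_m in powers of 1 - x and elevate each power to the
   Bernstein basis of degree N = n - k - l: because
   'C(N, g) (N - g)^_j = 'C(N - j, g) N^_j, the coefficient of (1 - x)^j on
   B^N_g is (-(N - g))_j / (-N)_j, so summing over j produces exactly the Hahn
   polynomial Q_m(N - g; a, b, N).  Multiplying by x^k (1 - x)^l then turns
   B^N_g into 'C(N, g) / 'C(n, g + k) B^n_(g + k). *)

From mathcomp Require Import all_boot all_order all_algebra.
From mathcomp Require Import zify ring.
Set Implicit Arguments. Unset Strict Implicit. Unset Printing Implicit Defensive.
Import Order.TTheory GRing.Theory Num.Theory.
Local Open Scope ring_scope.

Lemma bin_ffact_subn N g j : ('C(N, g) * (N - g) ^_ j = 'C(N - j, g) * N ^_ j)%N.
Proof.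
elim: j => [|j IH]; first by rewrite !ffactn0 subn0.
rewrite !ffactnSr mulnA IH subnAC mulnAC [('C(N - j, g) * _)%N]mulnC.
by rewrite -mul_bin_down -subnS; ring.
Qed.

Lemma poch_oppn (R : comNzRingType) (M j : nat) :
  poch (- M%:R : R) j = (-1) ^+ j * (M ^_ j)%:R.
Proof.
elim: j => [|j IH]; first by rewrite /poch big_ord0 expr0 mul1r.
rewrite /poch big_ord_recr /= -/(poch _ _) IH ffactnSr natrM exprS.
have [jM|Mj] := leqP j M; first by rewrite natrB //; ring.
by rewrite ffact_small // !(mul0r, mulr0).
Qed.

Lemma poch_oppn_neq0 (R : numDomainType) (M j : nat) :
  (j <= M)%N -> poch (- M%:R : R) j != 0.
Proof.
by move=> jM; rewrite poch_oppn mulf_neq0 ?signr_eq0 // pnatr_eq0 -lt0n ffact_gt0.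
Qed.

Lemma sum_bern (R : comNzRingType) (M : nat) (x : R) :
  \sum_(g < M.+1) bern M g x = 1.
Proof.
have := exprDn (1 - x) x M; rewrite subrK expr1n => ->; apply: eq_bigr => g _.
by rewrite /bern -[RHS]mulr_natl mulrAC mulrA.
Qed.

Lemma sum_bin_subn_expr (R : comNzRingType) (N j : nat) (x : R) : (j <= N)%N ->
  \sum_(g < N.+1) 'C(N - j, g)%:R * x ^+ g * (1 - x) ^+ (N - g) = (1 - x) ^+ j.
Proof.
move=> jN.
rewrite -[RHS]mulr1 -[X in _ = _ * X](sum_bern (N - j)%N x) big_distrr /=.
have leNj : ((N - j).+1 <= N.+1)%N by rewrite ltnS leq_subr.
rewrite (big_ord_widen _ (fun g => (1 - x) ^+ j * bern (N - j)%N g x) leNj).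
rewrite [RHS]big_mkcond.
apply: eq_bigr => g _; case: ltnP => [gNj|Njg]; last by rewrite bin_small ?mul0r.
by rewrite /bern (_ : N - g = j + (N - j - g))%N ?exprD; [ring | lia].
Qed.

Lemma poch_expr_subr_bern (R : comNzRingType) (N j : nat) (x : R) : (j <= N)%N ->
  poch (- N%:R) j * (1 - x) ^+ j =
  \sum_(g < N.+1) poch (- (N - g)%:R) j * bern N g x.
Proof.
move=> jN; rewrite -(sum_bin_subn_expr x jN) big_distrr /=; apply: eq_bigr => g _.
have := congr1 (GRing.natmul (1 : R)) (bin_ffact_subn N g j); rewrite !natrM => e.
rewrite !poch_oppn /bern.
transitivity ((-1) ^+ j * ('C(N - j, g)%:R * (N ^_ j)%:R)
                * (x ^+ g * (1 - x) ^+ (N - g))); first by ring.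
by rewrite -e; ring.
Qed.

Lemma bern_mul_expr (R : comNzRingType) (M k l g : nat) (x : R) :
  'C(M + k + l, g + k)%:R * (x ^+ k * (1 - x) ^+ l * bern M g x) =
  'C(M, g)%:R * bern (M + k + l) (g + k) x.
Proof.
have [gM|Mg] := leqP g M; last by rewrite /bern (bin_small Mg); ring.
rewrite /bern (_ : M + k + l - (g + k) = (M - g) + l)%N ?exprD; [ring | lia].
Qed.

Lemma shJacobi_bern (R : numFieldType) (a b : R) (m N : nat) (x : R) :
  (m <= N)%N ->
  shJacobi a b m x =
  \sum_(g < N.+1) poch (a + 1) m / m`!%:R * hahn m (N - g)%:R a b N * bern N g x.
Proof.
move=> mN; rewrite /shJacobi /hahn.
under eq_bigr => j _.
  have jN : (j <= N)%N by apply: leq_trans mN; rewrite -ltnS.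
  rewrite -[(1 - x) ^+ j](mulKf (@poch_oppn_neq0 R _ _ jN)).
  rewrite poch_expr_subr_bern // !big_distrr /=.
  over.
rewrite /= exchange_big big_distrr /=; apply: eq_bigr => g _.
rewrite -[RHS]mulrA big_distrl /=; congr (_ * _); apply: eq_bigr => j _.
by rewrite !invfM; ring.
Qed.

(* The identity is formal: (a + 1)_j occurs in the same denominators on both
   sides. *)
Theorem lemma1 (R : realFieldType) (n k l : nat) (alpha beta : R)
  (hkl : (k + l <= n)%N) (halpha : -1 < alpha) (hbeta : -1 < beta)
  (i : nat) (hi1 : (k + l <= i)%N) (hi2 : (i <= n)%N) (x : R) :
  modJacobi alpha beta i k l x =
  \sum_(k <= h < (n - l).+1) coefJB alpha beta n k l i h * bern n h x.
Proof.
set N := (n - k - l)%N; set m := (i - k - l)%N.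
have mN : (m <= N)%N by rewrite /m /N; lia.
rewrite /modJacobi (shJacobi_bern _ _ _ mN) big_distrr /=.
rewrite (big_addn 0 _ k) big_mkord.
rewrite (_ : (n - l).+1 - k = N.+1)%N; last by rewrite /N; lia.
apply: eq_bigr => g _; have gN : (g <= N)%N by rewrite -ltnS.
have nE : (N + k + l = n)%N by rewrite /N; lia.
have Cn : 'C(n, g + k)%:R != 0 :> R by rewrite pnatr_eq0 -lt0n bin_gt0 -nE; lia.
have := bern_mul_expr N k l g x; rewrite nE => hB.
rewrite /coefJB addnK (_ : n - l - (g + k) = N - g)%N; last by rewrite /N in gN *; lia.
set P := _ / _; set H := hahn _ _ _ _ _.
transitivity (P * H * ('C(n, g + k)%:R^-1 * ('C(N, g)%:R * bern n (g + k) x))).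
  by rewrite -hB mulKf //; ring.
by ring.
Qed.
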